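(* Assume $\sigma_1(x)=\tfrac12\sigma_1''(0)\,x(x-a_1)$ and $\sigma_2(x)=\tfrac12\sigma_2''(0)\,x(x-a_2)$ with $\sigma_1''(0)\ne0$, $\sigma_2''(0)\ne0$ and real $0<a_2<a_1$. Let $\Lambda_q=q^{-2}\Big[1+\frac{(1-q^{-1})\tau'(0)}{\frac12\sigma_1''(0)}\Big]$ and $y_0=q^{-1}\Big[1-\frac{(1-q^{-1})}{a_1}\frac{\tau(0)}{\frac12\sigma_1''(0)}\Big]$, and assume $qy_0<0$ and $q^2\Lambda_q<0$. Put $a=a_2$, $b=q^{-1}a_1$, and suppose $q^{-N-1}a=b$ for some $N\in\mathbb{N}_0$. Let $$\rho(x)=|x|^{\alpha}\sqrt{x^{\log_qx-1}}\,(qa/x,\,x/b;q)_\infty,\qquad q^{\alpha}=-\frac{q^{-3}\sigma_2''(0)}{\sigma_1''(0)b}.$$ Then there exist polynomials $P_0,\dots,P_N$, with $P_n$ of degree $n$ a solution of the q-EHT with $\lambda=\lambda_n$, and nonzero constants $d_n^2$, such that for $m,n\in\{0,\dots,N\}$ $$\int_a^{b}P_n(x)P_m(x)\rho(x)\,d_{q^{-1}}x=d_n^2\delta_{mn},$$ i.e. orthogonality with respect to $\rho$ supported on $\{q^{-k}a\}_{k=0}^N$.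
   Context: Throughout $0<q<1$. For a function $y$ and $\zeta\in\{q,q^{-1}\}$, $D_\zeta y(x)=\frac{y(x)-y(\zeta x)}{(1-\zeta)x}$ for $x\ne0$ and $D_\zeta y(0)=y'(0)$; $[n]_q=\frac{1-q^n}{1-q}$. Let $\sigma_1$ be a real polynomial of degree at most two, $\tau(x)=\tau'(0)x+\tau(0)$ a real polynomial with $\tau'(0)\ne0$, and $\sigma_2(x):=q[\sigma_1(x)+(1-q^{-1})x\tau(x)]$. The q-EHT with parameter $n$ is $\sigma_1(x)D_{q^{-1}}D_qy(x)+\tau(x)D_qy(x)+\lambda_ny(x)=0$, $\lambda_n=-[n]_q\big(\tau'(0)+\tfrac12[n-1]_{q^{-1}}\sigma_1''(0)\big)$. $(\beta;q)_\infty=\prod_{k\ge0}(1-\beta q^k)$, $(\beta_1,\dots,\beta_r;q)_\infty=\prod_i(\beta_i;q)_\infty$. For $q^\alpha=c$ ($c\ne0$), $\alpha$ is any complex number with $e^{\alpha\ln q}=c$ and $|x|^\alpha:=e^{\alpha\ln|x|}$; for $x>0$, $\sqrt{x^{\log_qx-1}}:=\exp\big(\tfrac12(\log_qx-1)\ln x\big)$. For $a>0$ and $b=q^{-N-1}a$, $\int_a^{b}f(x)\,d_{q^{-1}}x=(q^{-1}-1)a\sum_{k=0}^{N}q^{-k}f(q^{-k}a)$. *)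

From HB Require Import structures.
From mathcomp Require Import all_boot all_order all_algebra.
From mathcomp Require Import all_classical all_reals all_analysis.
From mathcomp Require Import complex.
Set Implicit Arguments. Unset Strict Implicit. Unset Printing Implicit Defensive.
Import Order.TTheory GRing.Theory Num.Theory.
Local Open Scope ring_scope.

Section QEHT.
Variable R : realType.

Definition qD (zeta : R) (y : R -> R) (x : R) : R :=
  if x != 0 then (y x - y (zeta * x)) / ((1 - zeta) * x) else derive1 y 0.

Definition qnum (q : R) (n : int) : R := (1 - q ^ n) / (1 - q).

(* sigma_1(x) = 1/2 sigma_1''(0) x (x - a1), with s1 = sigma_1''(0) *)
Definition sigma1 (s1 a1 : R) (x : R) : R := s1 / 2 * x * (x - a1).
(* tau(x) = tau'(0) x + tau(0), with t1 = tau'(0), t0 = tau(0) *)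
Definition tau (t0 t1 : R) (x : R) : R := t1 * x + t0.
Definition sigma2 (q s1 a1 t0 t1 : R) (x : R) : R :=
  q * (sigma1 s1 a1 x + (1 - q^-1) * x * tau t0 t1 x).

Definition lambda (q s1 t1 : R) (n : nat) : R :=
  - qnum q n%:Z * (t1 + 1 / 2 * qnum q^-1 (n%:Z - 1) * s1).

Definition qEHT (q s1 a1 t0 t1 : R) (n : nat) (y : R -> R) : Prop :=
  forall x : R, sigma1 s1 a1 x * qD q^-1 (qD q y) x + tau t0 t1 x * qD q y x
                + lambda q s1 t1 n * y x = 0.

Definition qpoch_inf (beta q : R) : R :=
  limn (fun n : nat => \prod_(k < n) (1 - beta * q ^+ k)).

Local Open Scope complex_scope.
Definition cexpR (z : R[i]) : R[i] :=
  (expR (complex.Re z) * cos (complex.Im z)) +i* (expR (complex.Re z) * sin (complex.Im z)).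
Definition cpow_abs (x : R) (alpha : R[i]) : R[i] :=
  cexpR (alpha * (ln `|x|)%:C).
Local Close Scope complex_scope.

Definition sqrt_qpow (q x : R) : R :=
  expR (1 / 2 * (ln x / ln q - 1) * ln x).

Definition rho (q a b : R) (alpha : R[i]) (x : R) : R[i] :=
  (cpow_abs x alpha * (sqrt_qpow q x * qpoch_inf (q * a / x) q
                        * qpoch_inf (x / b) q)%:C)%C.

(* Jackson integral int_a^b f(x) d_{q^{-1}} x for b = q^{-N-1} a:
   (q^{-1} - 1) a sum_{k=0}^N q^{-k} f(q^{-k} a). *)
Definition jackson_qinv (q a : R) (N : nat) (f : R -> R[i]) : R[i] :=
  (((q^-1 - 1) * a)%:C * \sum_(k < N.+1) ((q ^- k)%:C * f (q ^- k * a)))%C.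

End QEHT.

(* The q-EHT operator is triangular on monomials: it sends ['X^j] to
   [- lambda_j 'X^j + nu_j 'X^(j-1)], and [q^2 Lambda_q < 0] makes the
   eigenvalues [lambda_n] pairwise distinct, so back substitution gives a monic
   eigenpolynomial of each degree [n].
   On the lattice [x_k = q^-k a], [k = 0..N], the q-EHT becomes a three-term
   difference equation whose coefficients vanish at the ends ([sigma2 a = 0],
   [sigma1 (q b) = 0]), and the Jackson weights [q^-k rho(x_k)] satisfy the
   Pearson relation [w_k sigma1(x_k) = w_(k+1) sigma2(x_(k+1))].  Summation by
   parts then makes the difference operator symmetric for the weighted sum, so
   eigenpolynomials for distinct eigenvalues are orthogonal.  Up to the common
   factor [(q^-1 - 1) a |a|^alpha] the Jackson weights are positive reals, so
   [d_n^2] is nonzero: a nonzero polynomial of degree [<= N] cannot vanish at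
   the [N + 1] lattice points. *)

From HB Require Import structures.
From mathcomp Require Import all_boot all_order all_algebra.
From mathcomp Require Import all_classical all_reals all_analysis.
From mathcomp Require Import complex.
From mathcomp Require Import ring lra zify.
Import Order.TTheory GRing.Theory Num.Theory.
Import numFieldNormedType.Exports.
Local Open Scope ring_scope.
Local Open Scope complex_scope.

Section QDerivativePoly.
Context {R : realType}.
Implicit Types (z : R) (p : {poly R}).

Lemma qnum0 z : qnum z 0 = 0.
Proof. by rewrite /qnum expr0z subrr mul0r. Qed.

Definition qderiv z p : {poly R} :=
  \poly_(i < size p) (p`_i.+1 * qnum z i.+1%:Z).

Lemma coef_qderiv z p j : (qderiv z p)`_j = p`_j.+1 * qnum z j.+1%:Z.
Proof.
rewrite coef_poly; case: ifP => // /negbT; rewrite -leqNgt => le_p_j.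
by rewrite nth_default ?mul0r // (leq_trans le_p_j).
Qed.

Lemma qD_horner z p : z != 1 -> qD z (horner p) = horner (qderiv z p).
Proof.
move=> z_neq1; apply/funext => x; rewrite /qD.
have z1_neq0 : 1 - z != 0 by rewrite subr_eq0 eq_sym.
have [->|x_neq0] /= := eqVneq x 0.
  rewrite -derivE !horner_coef0 coef_deriv coef_qderiv /qnum /=.
  by rewrite expr1z divff // mulr1 mulr1n.
apply: (@mulIf _ ((1 - z) * x)); first by rewrite mulf_neq0.
rewrite divfK ?mulf_neq0 //.
rewrite !(@horner_coef_wide _ (size p).+1 p) //.
rewrite (@horner_coef_wide _ (size p) (qderiv z p)) ?size_poly //.
rewrite -sumrB big_ord_recl /= !expr0 subrr add0r mulr_suml.
apply: eq_bigr => i _; rewrite coef_qderiv /qnum /= /bump /= add1n.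
rewrite exprMn; change (z ^ i.+1) with (z ^+ i.+1); rewrite exprS; field; done.
Qed.

End QDerivativePoly.

Section TriangularEigenpoly.
Context {F : fieldType}.
Variables (lam nu : nat -> F) (n : nat).

(* [tri_eigencoef k] is the coefficient of ['X^(n - k)], computed downwards from
   the leading coefficient [1]. *)
Fixpoint tri_eigencoef (k : nat) : F :=
  if k is k'.+1 then nu (n - k') * tri_eigencoef k' / (lam (n - k) - lam n) else 1.

Definition tri_eigenpoly : {poly F} := \poly_(i < n.+1) tri_eigencoef (n - i).

Lemma size_tri_eigenpoly : size tri_eigenpoly = n.+1.
Proof. by rewrite size_poly_eq //= subnn oner_neq0. Qed.

Lemma tri_eigenpoly_rec : (forall i, (i < n)%N -> lam i != lam n) ->
  forall i, (lam n - lam i) * tri_eigenpoly`_i + nu i.+1 * tri_eigenpoly`_i.+1 = 0.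
Proof.
move=> lam_neq i; rewrite /tri_eigenpoly !coef_poly.
have [lt_in|lt_ni|->] := ltngtP i n.
- rewrite !ltnS (ltnW lt_in) lt_in.
  rewrite (_ : (n - i = (n - i.+1).+1)%N) /=; last by lia.
  rewrite (_ : (n - (n - i.+1))%N = i.+1); last by lia.
  rewrite (_ : (n - (n - i.+1).+1)%N = i); last by lia.
  have := lam_neq i lt_in; rewrite -subr_eq0 => lam_in.
  by field.
- by rewrite !ltnS leqNgt lt_ni /= leqNgt ltnS (ltnW lt_ni) /= !mulr0 addr0.
- by rewrite ltnn ltnSn subrr !mul0r mulr0 addr0.
Qed.

End TriangularEigenpoly.

Section QEHTPolynomialSolutions.
Context {R : realType}.
Variables (q s1 a1 t0 t1 : R).

Definition nu (j : nat) : R :=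
  qnum q j%:Z * (t0 - a1 * (s1 / 2) * qnum q^-1 (j.-1)%:Z).

Lemma qEHT_horner n (p : {poly R}) : q != 1 ->
  (forall i, (lambda q s1 t1 n - lambda q s1 t1 i) * p`_i + nu i.+1 * p`_i.+1 = 0) ->
  qEHT q s1 a1 t0 t1 n (horner p).
Proof.
move=> q_neq1 p_rec x.
have qV_neq1 : q^-1 != 1 by rewrite invr_eq1.
rewrite (qD_horner q p q_neq1) (qD_horner _ _ qV_neq1).
set D1 := qderiv q p; set D2 := qderiv q^-1 D1.
pose E := (s1 / 2) *: (D2 * 'X * 'X) - (s1 / 2 * a1) *: (D2 * 'X)
  + t1 *: (D1 * 'X) + t0 *: D1 + lambda q s1 t1 n *: p.
have -> : sigma1 s1 a1 x * D2.[x] + tau t0 t1 x * D1.[x]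
          + lambda q s1 t1 n * p.[x] = E.[x].
  by rewrite /E !(hornerD, hornerN, hornerZ, hornerMX) /sigma1 /tau; ring.
suff -> : E = 0 by rewrite horner0.
apply/polyP => i; rewrite coef0 /E !coefD !coefN !coefZ !coefMX.
rewrite /D2 /D1 !coef_qderiv -[RHS](p_rec i) /lambda /nu.
by case: i => [|[|k]] /=; rewrite ?qnum0; ring.
Qed.

End QEHTPolynomialSolutions.

Section QEHTEigenvalues.
Context {R : realType}.
Variables (q s1 t1 : R).
Hypotheses (q_gt0 : 0 < q) (q_lt1 : q < 1) (s1_neq0 : s1 != 0).

Lemma lambdaE i : lambda q s1 t1 i =
  - ((1 - q ^+ i) / (1 - q)) * (t1 + 1 / 2 * ((1 - q / q ^+ i) / (1 - q^-1)) * s1).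
Proof.
have q_neq0 : q != 0 by rewrite gt_eqF.
rewrite /lambda /qnum exprzDr ?unitfE ?invr_eq0 // exprN1 invrK.
change (q^-1 ^ i%:Z) with (q^-1 ^+ i).
by rewrite exprVn [_^-1 * q]mulrC.
Qed.

(* [M] is [q^2 Lambda_q]; the difference of two eigenvalues factors as below,
   and [M < 0] makes the middle factor positive. *)
Lemma lambda_inj i n : 1 + (1 - q^-1) * t1 / (s1 / 2) < 0 -> i != n ->
  lambda q s1 t1 i != lambda q s1 t1 n.
Proof.
set M := 1 + _ => M_lt0 neq_in.
have q_neq0 : q != 0 by rewrite gt_eqF.
have q1_neq0 : 1 - q != 0 by rewrite subr_eq0 eq_sym lt_eqF.
rewrite !lambdaE; set r := q ^+ i; set s := q ^+ n.
have r_gt0 : 0 < r by rewrite exprn_gt0.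
have s_gt0 : 0 < s by rewrite exprn_gt0.
have neq_rs : r != s.
  by apply: contra neq_in => /eqP /(ieexprIn q_gt0 (negbT (lt_eqF q_lt1))) ->.
have factor_gt0 : 0 < q - M * r * s.
  by rewrite subr_gt0 (lt_trans _ q_gt0) // -mulrA nmulr_rlt0 // mulr_gt0.
rewrite -subr_eq0.
have -> : - ((1 - r) / (1 - q)) * (t1 + 1 / 2 * ((1 - q / r) / (1 - q^-1)) * s1) -
  - ((1 - s) / (1 - q)) * (t1 + 1 / 2 * ((1 - q / s) / (1 - q^-1)) * s1)
  = (s1 / 2) * q * (q - M * r * s) * (r - s) / (r * s * (1 - q) ^+ 2).
  rewrite /M; field.
  by rewrite q1_neq0 q_neq0 s1_neq0 (gt_eqF r_gt0) (gt_eqF s_gt0) subr_eq0 (lt_eqF q_lt1).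
rewrite !mulf_eq0 !negb_or !invr_eq0 !mulf_eq0 !negb_or.
by rewrite s1_neq0 q_neq0 q1_neq0 (gt_eqF r_gt0) (gt_eqF s_gt0) (gt_eqF factor_gt0) subr_eq0 neq_rs pnatr_eq0.
Qed.

End QEHTEigenvalues.

Lemma one_sub_sum_le_prod {R : realDomainType} (a : nat -> R) n :
  (forall k, 0 <= a k <= 1) -> 1 - \sum_(k < n) a k <= \prod_(k < n) (1 - a k).
Proof.
move=> a01; elim: n => [|n IHn]; first by rewrite big_ord0 big_ord0 subr0.
rewrite !big_ord_recr /=.
have /andP[an_ge0 an_le1] := a01 n.
have S_ge0 : 0 <= \sum_(k < n) a k by apply: sumr_ge0 => k _; case/andP: (a01 k).
apply: le_trans (_ : (1 - \sum_(k < n) a k) * (1 - a n) <= _).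
  have -> : (1 - \sum_(k < n) a k) * (1 - a n)
            = 1 - (\sum_(k < n) a k + a n) + (\sum_(k < n) a k) * a n by ring.
  by rewrite lerDl mulr_ge0.
by rewrite ler_wpM2r // subr_ge0.
Qed.

Section QPochhammer.
Context {R : realType}.
Variable q : R.
Hypotheses (q_gt0 : 0 < q) (q_lt1 : q < 1).

Definition qpochn (b : R) (n : nat) : R := \prod_(k < n) (1 - b * q ^+ k).

Lemma qpochnS b n : qpochn b n.+1 = qpochn b n * (1 - b * q ^+ n).
Proof. by rewrite /qpochn big_ord_recr. Qed.

Lemma qpochnSl b n : qpochn b n.+1 = (1 - b) * qpochn (b * q) n.
Proof.
rewrite /qpochn big_ord_recl expr0 mulr1; congr (_ * _).
by apply: eq_bigr => i _; rewrite exprS mulrA.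
Qed.

Lemma qpochnD b m n : qpochn b (m + n) = qpochn b m * qpochn (b * q ^+ m) n.
Proof.
rewrite /qpochn big_split_ord /=; congr (_ * _).
by apply: eq_bigr => i _; rewrite exprD mulrA.
Qed.

Lemma qpow_le1 n : q ^+ n <= 1.
Proof. by rewrite exprn_ile1 // ltW. Qed.

Section UnitInterval.
Variable b : R.
Hypotheses (b_ge0 : 0 <= b) (b_lt1 : b < 1).

Lemma qpochn_gt0 n : 0 < qpochn b n.
Proof.
apply: prodr_gt0 => k _; rewrite subr_gt0 (le_lt_trans _ b_lt1) //.
by rewrite ler_piMr // qpow_le1.
Qed.

Lemma qpochn_nonincreasing : nonincreasing_seq (qpochn b).
Proof.
apply/nonincreasing_seqP => n; rewrite qpochnS ger_pMr ?qpochn_gt0 //.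
by rewrite gerBl mulr_ge0 // exprn_ge0 // ltW.
Qed.

Lemma qpochn_cvg : cvgn (qpochn b).
Proof.
apply: cvgP; apply: nonincreasing_cvgn; first exact: qpochn_nonincreasing.
by exists 0 => _ [n _ <-]; exact/ltW/qpochn_gt0.
Qed.

(* For [q^K <= (1 - q) / 2], Weierstrass' inequality bounds every tail product
   [(b q^K; q)_j] below by [1/2]. *)
Lemma qpoch_inf_gt0 : 0 < qpoch_inf b q.
Proof.
have [K qK_small] : exists K, q ^+ K <= (1 - q) / 2.
  have e_gt0 : 0 < (1 - q) / 2 by rewrite divr_gt0 // subr_gt0.
  have : `|q| < 1 by rewrite ger0_norm // ltW.
  move/cvg_expr/cvgr0Pnorm_lt => /(_ _ e_gt0) [K _ HK].
  exists K; have /= := HK K (leqnn K).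
  by rewrite ger0_norm ?exprn_ge0 ?(ltW q_gt0) // => /ltW.
have tail_ge j : 1 / 2 <= qpochn (b * q ^+ K) j.
  have bqK_ge0 : 0 <= b * q ^+ K by rewrite mulr_ge0 // exprn_ge0 // ltW.
  have a01 k : 0 <= b * q ^+ K * q ^+ k <= 1.
    rewrite mulr_ge0 ?exprn_ge0 ?(ltW q_gt0) //=.
    rewrite mulr_ile1 ?exprn_ge0 ?qpow_le1 ?(ltW q_gt0) //.
    by rewrite (le_trans _ (ltW b_lt1)) // ler_piMr ?qpow_le1.
  apply: le_trans (one_sub_sum_le_prod _ j a01).
  have := geometric_le_lim j bqK_ge0 q_gt0; rewrite ger0_norm ?(ltW q_gt0) // => /(_ q_lt1).
  rewrite /series /= big_mkord => sum_le.
  suff : b * q ^+ K / (1 - q) <= 1 / 2 by lra.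
  rewrite ler_pdivrMr ?subr_gt0 //.
  by apply: le_trans (_ : q ^+ K <= _); [rewrite ler_piMl ?exprn_ge0 ?ltW | lra].
have qK_gt0 := qpochn_gt0 K.
apply: lt_le_trans (_ : qpochn b K / 2 <= _); first by rewrite divr_gt0.
apply: limr_ge; first exact: qpochn_cvg.
near=> n; rewrite /= -(subnKC (_ : (K <= n)%N)); last by near: n; exact: nbhs_infty_ge.
by rewrite -/(qpochn b _) qpochnD ler_pM2l // -div1r.
Unshelve. all: by end_near.
Qed.

End UnitInterval.

Lemma qpoch_inf_shift b : 0 <= b * q -> b * q < 1 ->
  qpoch_inf b q = (1 - b) * qpoch_inf (b * q) q.
Proof.
move=> bq_ge0 bq_lt1; apply: cvg_lim => //.
rewrite -cvg_shiftS /=.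
have -> : (fun n => \prod_(k < n.+1) (1 - b * q ^+ k)) = (fun n => (1 - b) * qpochn (b * q) n).
  by apply/funext => n; rewrite -qpochnSl.
have := qpochn_cvg _ bq_ge0 bq_lt1.
exact: cvgMl_tmp.
Qed.

End QPochhammer.

Section ComplexPower.
Context {R : realType}.
Implicit Types (z w alpha : R[i]) (x y : R).

Lemma cexpRD z w : cexpR (z + w) = cexpR z * cexpR w.
Proof.
case: z => a b; case: w => c d; rewrite /cexpR /=.
by rewrite expRD cosD sinD; congr (_ +i* _); ring.
Qed.

Lemma cexpR0 : cexpR (0 : R[i]) = 1.
Proof. by rewrite /cexpR /= expR0 cos0 sin0 !mul1r. Qed.

Lemma cexpRNK z : cexpR (- z) * cexpR z = 1.
Proof. by rewrite -cexpRD addNr cexpR0. Qed.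

Lemma cexpR_neq0 z : cexpR z != 0.
Proof.
apply/negP => /eqP cexp0; have := cexpRNK z.
by rewrite cexp0 mulr0 => /eqP; rewrite eq_sym oner_eq0.
Qed.

Lemma cexpRN z : cexpR (- z) = (cexpR z)^-1.
Proof. by apply: (mulIf (cexpR_neq0 z)); rewrite cexpRNK mulVf ?cexpR_neq0. Qed.

Lemma cpow_absM alpha x y : x != 0 -> y != 0 ->
  cpow_abs (x * y) alpha = cpow_abs x alpha * cpow_abs y alpha.
Proof.
move=> x_neq0 y_neq0.
by rewrite /cpow_abs normrM lnM ?posrE ?normr_gt0 // rmorphD mulrDr cexpRD.
Qed.

Lemma cpow_absV alpha x : x != 0 -> cpow_abs x^-1 alpha = (cpow_abs x alpha)^-1.
Proof.
move=> x_neq0.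
by rewrite /cpow_abs normrV ?unitfE // lnV ?posrE ?normr_gt0 // rmorphN mulrN cexpRN.
Qed.

End ComplexPower.

Section DiscreteSturmLiouville.
Context {R : idomainType}.
Variables (N : nat) (v A B : nat -> R).
Hypothesis A_N : A N = 0.
Hypothesis pearson : forall k, (k < N)%N -> v k * A k = v k.+1 * B k.+1.

Definition diff_op (f : nat -> R) (k : nat) : R :=
  A k * (f k.+1 - f k) + B k * (f k.-1 - f k).

Definition wsum (f g : nat -> R) : R := \sum_(k < N.+1) v k * f k * g k.

(* Summation by parts: the Pearson relation pairs the forward term at [k]
   with the backward term at [k.+1]. *)
Lemma wsum_diff_op f g : wsum (diff_op f) g
  = - \sum_(k < N) v k * A k * (f k.+1 - f k) * (g k.+1 - g k).
Proof.
rewrite /wsum (eq_bigr (fun k : 'I_N.+1 => v k * A k * (f k.+1 - f k) * g k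
          + v k * B k * (f k.-1 - f k) * g k)); last by move=> k _; rewrite /diff_op; ring.
rewrite big_split /= big_ord_recr /= A_N mulr0 !mul0r addr0.
rewrite big_ord_recl /= subrr mulr0 !mul0r add0r.
rewrite -sumrN -big_split /=; apply: eq_bigr => k _.
by rewrite /bump /= add1n -pearson //; ring.
Qed.

Lemma wsum_diff_opC f g : wsum (diff_op f) g = wsum f (diff_op g).
Proof.
rewrite [RHS](eq_bigr (fun k : 'I_N.+1 => v k * diff_op g k * f k)); last first.
  by move=> k _; rewrite mulrAC.
rewrite -/(wsum (diff_op g) f) !wsum_diff_op; congr (- _).
by apply: eq_bigr => k _; ring.
Qed.

Lemma wsum_eigen_orthogonal f g lf lg :
  (forall k, (k <= N)%N -> diff_op f k = lf * f k) ->
  (forall k, (k <= N)%N -> diff_op g k = lg * g k) ->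
  lf != lg -> wsum f g = 0.
Proof.
move=> f_eigen g_eigen neq_l.
have := wsum_diff_opC f g; rewrite /wsum.
rewrite (eq_bigr (fun k : 'I_N.+1 => lf * (v k * f k * g k))); last first.
  by move=> k _; rewrite (f_eigen k (ltn_ord k)); ring.
rewrite [RHS](eq_bigr (fun k : 'I_N.+1 => lg * (v k * f k * g k))); last first.
  by move=> k _; rewrite (g_eigen k (ltn_ord k)); ring.
rewrite -!mulr_sumr => /eqP; rewrite -subr_eq0 -mulrBl mulf_eq0 subr_eq0.
by rewrite (negbTE neq_l) => /eqP.
Qed.

End DiscreteSturmLiouville.

Lemma wsum_sqr_horner_gt0 {R : realDomainType} N (v x : nat -> R) (p : {poly R}) :
  (forall k, (k <= N)%N -> 0 < v k) -> injective x ->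
  p != 0 -> (size p <= N.+1)%N ->
  0 < wsum N v (fun k => p.[x k]) (fun k => p.[x k]).
Proof.
move=> v_gt0 x_inj p_neq0 size_p.
have terms_ge0 (k : 'I_N.+1) : true -> 0 <= v k * p.[x k] * p.[x k].
  move=> _; rewrite -mulrA; apply: mulr_ge0; first exact: ltW (v_gt0 _ (ltn_ord k)).
  by rewrite -expr2 sqr_ge0.
rewrite /wsum lt0r sumr_ge0 // andbT; apply/negP => /eqP/(psumr_eq0P terms_ge0) zero.
have roots : all (root p) [seq x (val k) | k <- enum 'I_N.+1].
  apply/allP => _ /mapP[k _ ->]; move/eqP: (zero k isT).
  by rewrite -mulrA mulf_eq0 (gt_eqF (v_gt0 _ (ltn_ord k))) /= mulf_eq0 orbb.
have := max_poly_roots p_neq0 roots.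
rewrite map_inj_uniq ?enum_uniq; last by move=> i j /x_inj/val_inj.
by rewrite size_map size_enum_ord => /(_ isT); rewrite ltnNge size_p.
Qed.

Section QLattice.
Context {R : realType}.
Variables (q s1 a1 t0 t1 s2 a2 : R) (N : nat) (alpha : R[i]).
Hypotheses (q_gt0 : 0 < q) (q_lt1 : q < 1).
Hypotheses (s1_neq0 : s1 != 0) (s2_neq0 : s2 != 0).
Hypothesis sigma2E : forall x, sigma2 q s1 a1 t0 t1 x = s2 / 2 * x * (x - a2).
Hypotheses (a2_gt0 : 0 < a2) (a2_lt_a1 : a2 < a1).
Hypothesis Lambda_lt0 : 1 + (1 - q^-1) * t1 / (s1 / 2) < 0.
Hypothesis a2_a1 : q ^- N.+1 * a2 = q^-1 * a1.

Definition qalpha : R := - (q ^- 3 * s2) / (s1 * (q^-1 * a1)).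
Hypothesis qalphaE : cexpR (alpha * (ln q)%:C)%C = qalpha%:C.

Definition grid (k : nat) : R := q ^- k * a2.

(* [weight k] is [q^-k rho(x_k) / |a|^alpha], see [rho_grid]. *)
Definition weight (k : nat) : R := q ^- k * qalpha ^- k * sqrt_qpow q (grid k)
  * qpoch_inf (q ^+ k.+1) q * qpoch_inf (q ^+ (N.+1 - k)) q.

Definition fwd_coef (k : nat) : R :=
  q ^+ 2 * sigma1 s1 a1 (grid k) / ((1 - q) ^+ 2 * grid k ^+ 2).

Definition bwd_coef (k : nat) : R :=
  sigma2 q s1 a1 t0 t1 (grid k) / ((1 - q) ^+ 2 * grid k ^+ 2).

Let q_neq0 : q != 0. Proof. by rewrite gt_eqF. Qed.
Let q1_neq0 : 1 - q != 0. Proof. by rewrite subr_eq0 eq_sym lt_eqF. Qed.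

Lemma qpow_lt1 m : (0 < m)%N -> q ^+ m < 1.
Proof. by case: m => // m _; rewrite exprn_ilt1 // ltW. Qed.

Lemma grid_gt0 k : 0 < grid k.
Proof. by rewrite mulr_gt0 // invr_gt0 exprn_gt0. Qed.

Lemma grid_inj : injective grid.
Proof.
move=> i j /(mulIf (lt0r_neq0 a2_gt0))/invr_inj.
exact/ieexprIn/negbT/lt_eqF.
Qed.

Lemma gridS k : q^-1 * grid k = grid k.+1.
Proof. by rewrite /grid exprS invfM mulrA [q^-1 * _]mulrC. Qed.

Lemma q_gridS k : q * grid k.+1 = grid k.
Proof. by rewrite -gridS mulrA mulfV ?mul1r. Qed.

Lemma grid_N : grid N = a1.
Proof.
apply: (mulfI (invr_neq0 q_neq0)); rewrite -a2_a1 /grid exprS invfM.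
by rewrite mulrA [q^-1 * _]mulrC.
Qed.

Lemma qa_div_grid k : q * a2 / grid k = q ^+ k.+1.
Proof. by rewrite /grid invfM invrK exprS; field; rewrite gt_eqF. Qed.

Lemma grid_div_b k : (k <= N)%N -> grid k / (q^-1 * a1) = q ^+ (N.+1 - k).
Proof.
move=> le_kN; rewrite -a2_a1 expfB ?ltnS // /grid; field.
by rewrite !expf_neq0 // gt_eqF.
Qed.

(* Comparing the two forms of [sigma2] at [1] and [-1] gives [s2 = q s1 M],
   hence [qalpha = - M / (q a1)] with [M < 0]. *)
Lemma qalpha_gt0 : 0 < qalpha.
Proof.
have s2E : s2 = sigma2 q s1 a1 t0 t1 1 + sigma2 q s1 a1 t0 t1 (-1).
  by rewrite !sigma2E; field.
have a1_gt0 : 0 < a1 by apply: lt_trans a2_lt_a1.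
have M_lt0 := Lambda_lt0; set M := 1 + _ in M_lt0.
have -> : qalpha = - M / (q * a1).
  rewrite /qalpha s2E /sigma2 /sigma1 /tau /M; field.
  by rewrite s1_neq0 q_neq0 gt_eqF.
by rewrite divr_gt0 ?oppr_gt0 // mulr_gt0.
Qed.

Lemma cpow_abs_grid k :
  cpow_abs (grid k) alpha = (cpow_abs a2 alpha * ((qalpha ^+ k)^-1)%:C)%C.
Proof.
have cpow_q : cpow_abs q alpha = qalpha%:C by rewrite /cpow_abs gtr0_norm.
elim: k => [|k IHk]; first by rewrite /grid expr0 invr1 mul1r rmorph1 mulr1.
rewrite -gridS cpow_absM ?invr_neq0 ?gt_eqF ?grid_gt0 // cpow_absV // cpow_q IHk.
by rewrite mulrC -mulrA -fmorphV -rmorphM [in RHS]exprSr [in RHS]invfM.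
Qed.

Lemma sqrt_qpow_gridS k :
  sqrt_qpow q (grid k.+1) = sqrt_qpow q (grid k) * q / grid k.
Proof.
set L := ln (grid k); set l := ln q.
have l_neq0 : l != 0 by rewrite lt_eqF // ln_lt0 // q_gt0 q_lt1.
have -> : sqrt_qpow q (grid k) * q / grid k = expR (1/2 * (L/l - 1) * L + l - L).
  by rewrite !expRD expRN /L /l !lnK ?posrE ?grid_gt0.
rewrite -gridS /sqrt_qpow lnM ?posrE ?invr_gt0 ?grid_gt0 // lnV ?posrE // -/L -/l.
by congr expR; field.
Qed.

Lemma weight_gt0 k : (k <= N)%N -> 0 < weight k.
Proof.
move=> le_kN; have qalpha_gt0 := qalpha_gt0.
have qpoch_gt0 m : (0 < m)%N -> 0 < qpoch_inf (q ^+ m) q.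
  by move=> m_gt0; rewrite qpoch_inf_gt0 ?exprn_ge0 ?ltW ?qpow_lt1.
rewrite !mulr_gt0 ?qpoch_gt0 ?subn_gt0 ?expR_gt0 ?invr_gt0 ?exprn_gt0 //.
Qed.

Lemma weight_ratio k : (k < N)%N ->
  weight k.+1 * (1 - q ^+ k.+1) * qalpha * grid k = weight k * (1 - q ^+ (N - k)).
Proof.
move=> lt_kN.
have qpoch_shift m : (0 < m.+1)%N ->
    qpoch_inf (q ^+ m) q = (1 - q ^+ m) * qpoch_inf (q ^+ m.+1) q.
  by move=> m_gt0; rewrite qpoch_inf_shift -?exprSr ?exprn_ge0 ?ltW ?qpow_lt1.
have le_kN : (k <= N)%N := ltnW lt_kN.
rewrite /weight sqrt_qpow_gridS (qpoch_shift k.+1) // subSS.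
rewrite (qpoch_shift (N - k)%N) -?subSn // ?ltnS ?subn_gt0 //.
have := qalpha_gt0; have := grid_gt0 k => grid_gt0 qalpha_gt0.
by rewrite !exprS; field; rewrite !expf_neq0 ?gt_eqF.
Qed.

Lemma weight_sigma_balance k : (k < N)%N ->
  weight k * sigma1 s1 a1 (grid k) = weight k.+1 * sigma2 q s1 a1 t0 t1 (grid k.+1).
Proof.
move=> lt_kN.
have qalpha_gt0 := qalpha_gt0; have grid_gt0 := grid_gt0 k.
have qk_neq1 : 1 - q ^+ k.+1 != 0 by rewrite subr_eq0 eq_sym lt_eqF // qpow_lt1.
have -> : weight k.+1
    = weight k * (1 - q ^+ (N - k)) / ((1 - q ^+ k.+1) * qalpha * grid k).
  by rewrite -weight_ratio //; field; rewrite qk_neq1 !gt_eqF.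
rewrite sigma2E -gridS /sigma1 /qalpha -grid_N /grid (expfB _ lt_kN).
move: qk_neq1; rewrite exprS => qk_neq1; field.
by rewrite qk_neq1 s1_neq0 s2_neq0 q_neq0 !gt_eqF ?exprn_gt0.
Qed.

Lemma weight_pearson k : (k < N)%N -> weight k * fwd_coef k = weight k.+1 * bwd_coef k.+1.
Proof.
move=> lt_kN; have := weight_sigma_balance _ lt_kN.
rewrite /fwd_coef /bwd_coef -(q_gridS k) => balance.
rewrite [RHS]mulrA -balance; field.
by rewrite q1_neq0 q_neq0 gt_eqF ?grid_gt0.
Qed.

Lemma fwd_coef_N : fwd_coef N = 0.
Proof. by rewrite /fwd_coef grid_N /sigma1 subrr !mulr0 mul0r. Qed.

Lemma bwd_coef0 : bwd_coef 0 = 0.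
Proof. by rewrite /bwd_coef sigma2E /grid expr0 invr1 mul1r subrr !mulr0 mul0r. Qed.

(* At [k = 0] the value [f (q a2)] off the lattice is cancelled by [sigma2 a2 = 0]. *)
Lemma qEHT_diff_op n f k : qEHT q s1 a1 t0 t1 n f ->
  diff_op fwd_coef bwd_coef (f \o grid) k = - lambda q s1 t1 n * f (grid k).
Proof.
move=> /(_ (grid k)); rewrite /qD.
have grid_neq0 j : grid j != 0 by rewrite gt_eqF ?grid_gt0.
have qV_neq1 : 1 - q^-1 != 0 by rewrite subr_eq0 eq_sym invr_eq1 lt_eqF.
rewrite grid_neq0 mulf_neq0 ?invr_neq0 //= gridS q_gridS => qEHT_k.
rewrite -[RHS]addr0 -[X in _ + X]qEHT_k.
have -> : diff_op fwd_coef bwd_coef (f \o grid) k = fwd_coef k * (f (grid k.+1) - f (grid k))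
    + bwd_coef k * (f (q * grid k) - f (grid k)).
  by case: k {qEHT_k} => [|k]; rewrite /diff_op /= ?bwd_coef0 ?mul0r // q_gridS.
rewrite /fwd_coef /bwd_coef /sigma2 -gridS; field.
by rewrite q1_neq0 q_neq0 grid_neq0 subr_eq0 lt_eqF.
Qed.

Lemma rho_grid k : (k <= N)%N -> rho q a2 (q^-1 * a1) alpha (grid k)
  = cpow_abs a2 alpha * (q ^+ k * weight k)%:C.
Proof.
move=> le_kN; rewrite /rho cpow_abs_grid qa_div_grid grid_div_b // /weight.
by rewrite -mulrA -!rmorphM; congr (_ * _%:C); field; rewrite !expf_neq0 ?gt_eqF ?qalpha_gt0.
Qed.

Lemma jackson_wsum (f g : R -> R) :
  jackson_qinv q a2 N (fun x => (f x)%:C * (g x)%:C * rho q a2 (q^-1 * a1) alpha x)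
  = ((q^-1 - 1) * a2)%:C * cpow_abs a2 alpha * (wsum N weight (f \o grid) (g \o grid))%:C.
Proof.
rewrite /jackson_qinv -mulrA; congr (_ * _).
rewrite /wsum rmorph_sum mulr_sumr; apply: eq_bigr => k _.
rewrite -[q ^- k * a2]/(grid k) (rho_grid _ (ltn_ord k)) /=; move: (weight k) => w.
rewrite [LHS](_ : _ = cpow_abs a2 alpha * (q ^- k * q ^+ k * w * f (grid k) * g (grid k))%:C).
  by rewrite mulVf ?mul1r // expf_neq0.
by rewrite !rmorphM; ring.
Qed.

Lemma exists_orthogonal_qEHT_polys :
  exists (P : nat -> {poly R}) (d : nat -> R[i]),
    (forall n : nat, (n <= N)%N ->
       [/\ size (P n) = n.+1, qEHT q s1 a1 t0 t1 n (fun x => (P n).[x]) & d n != 0]) /\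
    (forall m n : nat, (m <= N)%N -> (n <= N)%N ->
       jackson_qinv q a2 N
         (fun x => (P n).[x]%:C * (P m).[x]%:C * rho q a2 (q^-1 * a1) alpha x)
       = if m == n then d n else 0).
Proof.
have lambda_neq i n : i != n -> lambda q s1 t1 i != lambda q s1 t1 n.
  exact: lambda_inj.
pose P n := tri_eigenpoly (lambda q s1 t1) (nu q s1 a1 t0) n.
have P_qEHT n : qEHT q s1 a1 t0 t1 n (horner (P n)).
  apply: qEHT_horner; first exact/negbT/lt_eqF.
  by apply: tri_eigenpoly_rec => i lt_in; rewrite lambda_neq // ltn_eqF.
have P_eigen n k (_ : (k <= N)%N) :
    diff_op fwd_coef bwd_coef (horner (P n) \o grid) k
    = - lambda q s1 t1 n * (horner (P n) \o grid) k.
  exact: qEHT_diff_op.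
pose d n := jackson_qinv q a2 N
  (fun x => (P n).[x]%:C * (P n).[x]%:C * rho q a2 (q^-1 * a1) alpha x).
exists P, d; split => [n le_nN | m n le_mN le_nN].
  split; [exact: size_tri_eigenpoly | exact: P_qEHT |].
  rewrite /d jackson_wsum !mulf_neq0 ?cexpR_neq0 //.
  - by rewrite fmorph_eq0 mulf_neq0 ?(gt_eqF a2_gt0) // subr_eq0 gt_eqF // invf_gt1.
  - rewrite fmorph_eq0 gt_eqF // wsum_sqr_horner_gt0 ?size_tri_eigenpoly //.
    + exact: weight_gt0.
    + exact: grid_inj.
    + by rewrite -size_poly_eq0 size_tri_eigenpoly.
have [->|neq_mn] := eqVneq m n; first by [].
rewrite jackson_wsum (wsum_eigen_orthogonal _ _ _ _ fwd_coef_N weight_pearson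
  _ _ _ _ (P_eigen n) (P_eigen m)) ?rmorph0 ?mulr0 //.
by rewrite eqr_opp lambda_neq // eq_sym.
Qed.

End QLattice.

Theorem theorem4p12 (R : realType) (q s1 a1 t0 t1 s2 a2 : R) (N : nat)
    (alpha : R[i]) :
  0 < q -> q < 1 ->
  t1 != 0 -> s1 != 0 ->
  s2 != 0 ->
  (forall x : R, sigma2 q s1 a1 t0 t1 x = s2 / 2 * x * (x - a2)) ->
  0 < a2 -> a2 < a1 ->
  q * (q^-1 * (1 - (1 - q^-1) / a1 * (t0 / (s1 / 2)))) < 0 ->
  q ^+ 2 * (q ^- 2 * (1 + (1 - q^-1) * t1 / (s1 / 2))) < 0 ->
  q ^- N.+1 * a2 = q^-1 * a1 ->
  cexpR (alpha * (ln q)%:C)%C = (- (q ^- 3 * s2) / (s1 * (q^-1 * a1)))%:C ->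
  exists (P : nat -> {poly R}) (d : nat -> R[i]),
    (forall n : nat, (n <= N)%N ->
       [/\ size (P n) = n.+1,
           qEHT q s1 a1 t0 t1 n (fun x => (P n).[x]) & d n != 0]) /\
    (forall m n : nat, (m <= N)%N -> (n <= N)%N ->
       jackson_qinv q a2 N
         (fun x => ((P n).[x]%:C * (P m).[x]%:C
                    * rho q a2 (q^-1 * a1) alpha x)%C)
       = if m == n then d n else 0).
Proof.
move=> q_gt0 q_lt1 _ s1_neq0 s2_neq0 sigma2E a2_gt0 a2_lt_a1 _ Lambda_lt0 a2_a1 qalphaE.
rewrite mulrA mulfV ?mul1r ?expf_neq0 ?gt_eqF // in Lambda_lt0.
exact: exists_orthogonal_qEHT_polys qalphaE.
Qed.
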